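(* For every $\alpha\ge1$, the function $E_{\alpha}^{*}(\cdot)$ on edge streams is $2$-almost-smooth.
   Context: Let $S=(e_1,\ldots,e_k)$ be a sequence of edges on vertex set $V=[n]$. An edge $e_i=\{u,v\}$ is $\alpha$-good with respect to $S$ if $d_i(u)\le\alpha$ and $d_i(v)\le\alpha$, where $d_i(x)=|\{e_j: j>i,\ x\in e_j\}|$ is the number of edges incident to $x$ appearing after $e_i$ in $S$. Let $E_\alpha(S)$ be the set of $\alpha$-good edges of $S$ and $E_\alpha^*(S)=\max_{t\in[k]}|E_\alpha(S_t)|$, where $S_t=(e_1,\ldots,e_t)$. For disjoint consecutive segments $A,B$, $AB$ is their concatenation. A function $f$ is $2$-almost-smooth if: (1) $f(A)\ge0$ for all $A$; (2) $f(B)\le f(AB)$ for all disjoint segments $A,B$; (3) $f(A)\le\mathrm{poly}(n)$; (4) for all disjoint consecutive segments $A,B,C$ with $f(AB)\ne0$, $f(ABC)\ne0$, $\frac{f(B)}{f(AB)}\le2\cdot\frac{f(BC)}{f(ABC)}$. *)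

From HB Require Import structures.
From mathcomp Require Import all_boot all_order all_algebra.
Set Implicit Arguments. Unset Strict Implicit. Unset Printing Implicit Defensive.
Import Order.TTheory GRing.Theory Num.Theory.

Definition edge (n : nat) := {e : {set 'I_n} | #|e| == 2}.

Definition deg_after n (S : seq (edge n)) (i : nat) (x : 'I_n) : nat :=
  count (fun e : edge n => x \in val e) (drop i.+1 S).

(* the edge e sitting at (0-based) position i of S is alpha-good *)
Definition good_at n (alpha : nat) (S : seq (edge n)) (i : nat) (e : edge n) : bool :=
  [forall x in val e, deg_after S i x <= alpha].

Definition E_good n (alpha : nat) (S : seq (edge n)) : {set {set 'I_n}} :=
  [set e : {set 'I_n} | e \in
     [seq val ie.2 | ie <- zip (iota 0 (size S)) S & good_at alpha S ie.1 ie.2]].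

(* E*_alpha(S) = max_{t in [k]} |E_alpha(S_t)|, S_t = (e_1,...,e_t); 0 if S empty *)
Definition E_star n (alpha : nat) (S : seq (edge n)) : nat :=
  \max_(t < size S) #|E_good alpha (take t.+1 S)|.

(* c-almost-smooth for a (nat-valued, hence nonnegative) function f defined on
   edge streams over [n], for every n. Segments are arbitrary edge sequences,
   AB is concatenation. *)
Definition almost_smooth (c : rat) (f : forall n, seq (edge n) -> nat) : Prop :=
  (forall n (A : seq (edge n)), (0 <= (f n A)%:R :> rat)%R) /\
  (forall n (A B : seq (edge n)), f n B <= f n (A ++ B)) /\
  (exists a d : nat, forall n (A : seq (edge n)), f n A <= a * n ^ d) /\
  (forall n (A B C : seq (edge n)),
      f n (A ++ B) != 0 -> f n (A ++ B ++ C) != 0 ->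
      ((f n B)%:R / (f n (A ++ B))%:R <= c * ((f n (B ++ C))%:R / (f n (A ++ B ++ C))%:R) :> rat)%R).

(* An edge occurrence is good in a stream depending only on the edges after
   it, so a good edge of B stays good in AB, and E*(B) <= E*(AB); since E* is
   a maximum over prefixes, also E*(B) <= E*(BC).  A good edge of a prefix of
   XY lies either in X, where it has no more later edges than in XY, or in the
   corresponding prefix of Y; hence E*(XY) <= E*(X) + E*(Y).  With these three
   facts, E*(B) E*(ABC) <= E*(B) (E*(AB) + E*(C)) <= 2 E*(BC) E*(AB). *)

From mathcomp Require Import all_boot all_order all_algebra.
From mathcomp Require Import zify.
Set Implicit Arguments. Unset Strict Implicit. Unset Printing Implicit Defensive.
Import Order.TTheory GRing.Theory Num.Theory.

Section ZipIota.
Variable T : Type.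
Implicit Types X Y : seq T.

Lemma zip_iota_shift Y m k :
  zip (iota (m + k) (size Y)) Y =
  [seq (m + p.1, p.2) | p <- zip (iota k (size Y)) Y].
Proof. by elim: Y k => [|y Y IH] k //=; rewrite -addnS IH. Qed.

Lemma zip_iota_cat X Y :
  zip (iota 0 (size (X ++ Y))) (X ++ Y) =
  zip (iota 0 (size X)) X ++
  [seq (size X + p.1, p.2) | p <- zip (iota 0 (size Y)) Y].
Proof.
rewrite size_cat iotaD zip_cat ?size_iota // add0n.
by rewrite -[in iota (size X) _](addn0 (size X)) zip_iota_shift.
Qed.

End ZipIota.

Lemma bin2_leq_sqr n : 'C(n, 2) <= n ^ 2.
Proof.
rewrite bin2 leq_half_double; apply: leq_trans (leqnSn _).
rewrite -mul2n expnS expn1; apply: leq_trans (leq_pmull _ _) => //.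
by rewrite leq_mul2l leq_pred orbT.
Qed.

Section GoodEdges.
Variables n alpha : nat.
Implicit Types S X Y : seq (edge n).

Lemma deg_after_catl X Y i x : deg_after X i x <= deg_after (X ++ Y) i x.
Proof.
rewrite /deg_after drop_cat; case: ifP => hi; first by rewrite count_cat leq_addr.
by rewrite drop_oversize // leqNgt hi.
Qed.

Lemma deg_after_catr X Y j x :
  deg_after (X ++ Y) (size X + j) x = deg_after Y j x.
Proof.
by rewrite /deg_after -addnS drop_cat ltnNge leq_addr /= addKn.
Qed.

Lemma good_at_catl X Y i e :
  good_at alpha (X ++ Y) i e -> good_at alpha X i e.
Proof.
move=> /forall_inP good_e; apply/forall_inP => x xe.
exact: leq_trans (deg_after_catl X Y i x) (good_e x xe).
Qed.

Lemma good_at_catr X Y j e :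
  good_at alpha (X ++ Y) (size X + j) e = good_at alpha Y j e.
Proof.
by apply: eq_forallb => x; rewrite deg_after_catr.
Qed.

Lemma E_good_cat_subset X Y :
  E_good alpha (X ++ Y) \subset E_good alpha X :|: E_good alpha Y.
Proof.
apply/subsetP => E; rewrite !inE => /mapP [[i e]].
rewrite mem_filter zip_iota_cat mem_cat /= => /andP [good_e /orP []] ie ->.
  apply/orP; left; apply/mapP; exists (i, e) => //.
  by rewrite mem_filter (good_at_catl good_e).
case/mapP: ie good_e => [[j e'] je [-> ->]] good_e.
apply/orP; right; apply/mapP; exists (j, e') => //.
by rewrite mem_filter -(good_at_catr X) good_e.
Qed.

Lemma E_good_suffix_subset X Y : E_good alpha Y \subset E_good alpha (X ++ Y).
Proof.
apply/subsetP => E; rewrite !inE => /mapP [[j e]].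
rewrite mem_filter /= => /andP [good_e je] ->.
apply/mapP; exists (size X + j, e) => //.
rewrite mem_filter /= good_at_catr good_e zip_iota_cat mem_cat.
by apply/orP; right; apply/mapP; exists (j, e).
Qed.

Lemma E_good_nil : E_good alpha ([::] : seq (edge n)) = set0.
Proof. by apply/setP => e; rewrite !inE. Qed.

Lemma card_E_good_leq S : #|E_good alpha S| <= 'C(n, 2).
Proof.
rewrite -[n in 'C(n, _)]card_ord -card_draws subset_leq_card //.
by apply/subsetP => E; rewrite !inE => /mapP [[i e] _ ->]; apply: (valP e).
Qed.

Lemma card_E_good_take_leq S t :
  t <= size S -> #|E_good alpha (take t S)| <= E_star alpha S.
Proof.
case: t => [|t] lt_t_S; first by rewrite take0 E_good_nil cards0.
exact: (leq_bigmax_cond (F := fun i : 'I_(size S) => #|E_good alpha (take i.+1 S)|)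
                        (Ordinal lt_t_S)).
Qed.

Lemma E_star_leq S : E_star alpha S <= 'C(n, 2).
Proof. by apply/bigmax_leqP => i _; apply: card_E_good_leq. Qed.

Lemma E_star_prefix X Y : E_star alpha X <= E_star alpha (X ++ Y).
Proof.
apply/bigmax_leqP => i _; have lt_i_X := ltn_ord i.
rewrite -(takel_cat Y lt_i_X); apply: card_E_good_take_leq.
by rewrite size_cat; lia.
Qed.

Lemma E_star_suffix X Y : E_star alpha Y <= E_star alpha (X ++ Y).
Proof.
apply/bigmax_leqP => i _; have lt_i_Y := ltn_ord i.
apply: leq_trans (subset_leq_card (E_good_suffix_subset X _)) _.
have -> : X ++ take i.+1 Y = take (size X + i.+1) (X ++ Y).
  by rewrite take_cat ltnNge leq_addr /= addKn.
by apply: card_E_good_take_leq; rewrite size_cat; lia.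
Qed.

Lemma E_star_cat X Y : E_star alpha (X ++ Y) <= E_star alpha X + E_star alpha Y.
Proof.
apply/bigmax_leqP => i _; have lt_i_XY : i < size X + size Y by rewrite -size_cat.
rewrite take_cat; case: ifP => lt_i_X.
  exact: leq_trans (card_E_good_take_leq (ltnW lt_i_X)) (leq_addr _ _).
apply: leq_trans (subset_leq_card (E_good_cat_subset _ _)) _.
apply: leq_trans (leq_card_setU _ _) _.
apply: leq_add; last by apply: card_E_good_take_leq; lia.
by rewrite -{1}(take_size X); apply: card_E_good_take_leq.
Qed.

End GoodEdges.

Lemma ratio_leq2_subadditive (b ab bc c abc : nat) :
  b <= ab -> b <= bc -> c <= bc -> abc <= ab + c -> ab != 0 -> abc != 0 ->
  (b%:R / ab%:R <= 2%R * (bc%:R / abc%:R) :> rat)%R.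
Proof.
move=> b_ab b_bc c_bc abc_ab_c ab0 abc0.
have key : b * abc <= 2 * bc * ab.
  apply: leq_trans (leq_mul (leqnn b) abc_ab_c) _.
  rewrite mulnDr -mulnA mul2n -addnn.
  apply: leq_add; first exact: leq_mul.
  by rewrite [bc * ab]mulnC leq_mul.
rewrite ler_pdivrMr ?ltr0n ?lt0n // mulrA mulrAC ler_pdivlMr ?ltr0n ?lt0n //.
by rewrite -!natrM ler_nat.
Qed.

Lemma almost_smooth2_subadditive (f : forall n, seq (edge n) -> nat) :
  (forall n (A B : seq (edge n)), f n A <= f n (A ++ B)) ->
  (forall n (A B : seq (edge n)), f n B <= f n (A ++ B)) ->
  (forall n (A B : seq (edge n)), f n (A ++ B) <= f n A + f n B) ->
  (exists a d : nat, forall n (A : seq (edge n)), f n A <= a * n ^ d) ->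
  almost_smooth 2%R f.
Proof.
move=> f_prefix f_suffix f_cat f_poly.
split; first by move=> n A; rewrite ler0n.
split; first exact: f_suffix.
split; first exact: f_poly.
move=> n A B C; apply: ratio_leq2_subadditive.
- exact: f_suffix.
- exact: f_prefix.
- exact: f_suffix.
- by rewrite catA f_cat.
Qed.

Theorem lemma3p3 (alpha : nat) :
  1 <= alpha -> almost_smooth 2%R (fun n => @E_star n alpha).
Proof.
(* The argument works for every alpha, including 0. *)
move=> _; apply: almost_smooth2_subadditive.
- by move=> n A B; apply: E_star_prefix.
- by move=> n A B; apply: E_star_suffix.
- by move=> n A B; apply: E_star_cat.
- exists 1, 2 => n A; rewrite mul1n.
  exact: leq_trans (E_star_leq _ _) (bin2_leq_sqr n).
Qed.
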